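(* Let $Q$ be a real affine space modelled on a real vector space $V$. For all $f,f'\in A(Q)$, all $n\in\mathbb N$, $q\in Q$ and $v_1,\dots,v_n\in V$, $$\delta^n(ff')(q;v_1,\dots,v_n)=\sum_{\substack{(I,I')\\ I\cup I'=N}}\delta^{|I|}f(q;\mathbf v^{I})\,\delta^{|I'|}f'(q;\mathbf v^{I'}),$$ where the sum runs over all ordered pairs $(I,I')$ of (possibly empty, possibly overlapping) subsets of $N=\{1,\dots,n\}$ with $I\cup I'=N$.
   Context: $A(Q)$ is the space of real functions on $Q$; $ff'$ is the pointwise product. For $I=\{i_1<\dots<i_m\}\subset N$, $\mathbf v^I=(v_{i_1},\dots,v_{i_m})$. The $m$-th polarization of $f\in A(Q)$ is $\delta^0f=f$ (so $\delta^0 f(q;\mathbf v^\emptyset)=f(q)$) and for $m\ge1$ $$\delta^m f(q;w_1,\dots,w_m)=(-1)^m\sum_{J\subset\{1,\dots,m\}}(-1)^{|J|}f\Big(q+\sum_{j\in J}w_j\Big),$$ the term for $J=\emptyset$ being $f(q)$. *)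

From HB Require Import structures.
From mathcomp Require Import all_boot all_order all_algebra.
From mathcomp Require Import reals.
Set Implicit Arguments. Unset Strict Implicit. Unset Printing Implicit Defensive.
Import Order.TTheory GRing.Theory Num.Theory.
Local Open Scope ring_scope.

Definition is_affine_space (R : realType) (V : lmodType R) (Q : Type)
    (act : Q -> V -> Q) : Prop :=
  [/\ (forall q, act q 0 = q),
      (forall q v w, act (act q v) w = act q (v + w)) &
      (forall q q', exists! v, act q v = q')].

Definition polarization (R : realType) (V : lmodType R) (Q : Type)
    (act : Q -> V -> Q) (m : nat) (f : Q -> R) (q : Q) (w : 'I_m -> V) : R :=
  (-1) ^+ m * \sum_(J : {set 'I_m}) (-1) ^+ #|J| * f (act q (\sum_(j in J) w j)).

(* v^I = (v_{i_1},...,v_{i_k}) for I = {i_1 < ... < i_k}; enum I lists I in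
   increasing order. *)
Definition subvec (V : Type) (n : nat) (v : 'I_n -> V) (I : {set 'I_n})
    : 'I_#|I| -> V :=
  fun k => v (enum_val k).
Arguments subvec {V n} v I k.
Arguments polarization {R V Q} act m f q w.

From HB Require Import structures.
From mathcomp Require Import all_boot all_order all_algebra.
From mathcomp Require Import reals.
Import Order.TTheory GRing.Theory Num.Theory.
Local Open Scope ring_scope.
Set Implicit Arguments. Unset Strict Implicit.

(* With h K := f (q + sum_(j in K) v_j), the polarization delta^|I| f (q; v^I) is
   the Möbius transform [mobius h I] of h on the lattice of subsets of N.  Its
   inverse, the zeta transform (summation over subsets), maps the union
   convolution of two set functions to their pointwise product, because the pairs
   (I, I') with I :|: I' \subset K are exactly those with I, I' \subset K.  With h' defined
   from f' likewise, h h' = zeta (mobius h) * zeta (mobius h')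
   = zeta (union_conv (mobius h) (mobius h')), and applying [mobius] gives the
   formula.  Möbius inversion itself rests on the
   alternating sum of (-1)^|I| over an interval A \subset I \subset B vanishing
   unless A = B, since toggling a point of B :\: A reverses the sign. *)

Definition toggle (T : finType) (x : T) (I : {set T}) : {set T} :=
  if x \in I then I :\ x else x |: I.

Section Toggle.
Variables (T : finType) (x : T).

Lemma in_toggle (I : {set T}) y : (y \in toggle x I) = (y == x) (+) (y \in I).
Proof.
rewrite /toggle; case: (boolP (x \in I)) => xI; rewrite !inE;
  by case: (eqVneq y x) => [->|]; rewrite ?xI ?(negbTE xI).
Qed.

Lemma toggleK : involutive (toggle x).
Proof. by move=> I; apply/setP => y; rewrite !in_toggle addbA addbb. Qed.

Lemma sign_card_toggle (R : pzRingType) (I : {set T}) :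
  (-1 : R) ^+ #|toggle x I| = - (-1) ^+ #|I|.
Proof.
rewrite /toggle; case: (boolP (x \in I)) => xI.
  by rewrite [in RHS](cardsD1 x I) xI add1n exprS mulN1r opprK.
by rewrite cardsU1 xI add1n exprS mulN1r.
Qed.

Lemma subset_toggle (A I : {set T}) : x \notin A -> (A \subset toggle x I) = (A \subset I).
Proof.
move=> xA; apply/subsetP/subsetP => sub y yA; have := sub y yA;
  by rewrite in_toggle (negbTE (memPn xA y yA)).
Qed.

Lemma toggle_subset (B I : {set T}) : x \in B -> (toggle x I \subset B) = (I \subset B).
Proof.
move=> xB; apply/subsetP/subsetP => sub y; have := sub y;
  case: (eqVneq y x) => [-> //|/negbTE neq]; by rewrite in_toggle neq.
Qed.

Lemma sum_toggle_odd (V : zmodType) (P : pred {set T}) (F : {set T} -> V) :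
  (forall I, P (toggle x I) = P I) -> (forall I, F (toggle x I) = - F I) ->
  \sum_(I | P I) F I = 0.
Proof.
move=> Ptoggle Ftoggle; rewrite (bigID (fun I : {set T} => x \in I)) /=.
rewrite [X in _ + X](reindex_inj (can_inj toggleK)) /=.
under [X in _ + X]eq_big => [I|I _].
- by rewrite Ptoggle in_toggle eqxx negbK over.
- by rewrite Ftoggle over.
by rewrite sumrN addrN.
Qed.

End Toggle.

Lemma sum_sign_interval (R : pzRingType) (T : finType) (A B : {set T}) :
  \sum_(I : {set T} | (A \subset I) && (I \subset B)) (-1 : R) ^+ #|I| =
  if A == B then (-1) ^+ #|A| else 0.
Proof.
have [<-|neqAB] := eqVneq A B.
  by rewrite (big_pred1 A) // => I; rewrite /= eqEsubset andbC.
have [sAB|nsAB] := boolP (A \subset B); last first.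
  rewrite big_pred0 // => I; apply/negbTE; apply: contra nsAB.
  by case/andP; apply: subset_trans.
have /set0Pn[x] : B :\: A != set0.
  by rewrite setD_eq0; apply: contra neqAB => sBA; rewrite eqEsubset sAB.
rewrite inE => /andP[xA xB].
apply: (sum_toggle_odd (x := x)) => I; last exact: sign_card_toggle.
by rewrite subset_toggle // toggle_subset.
Qed.

Section SubsetTransforms.
Variables (R : pzRingType) (T : finType).
Implicit Types (g h : {set T} -> R) (I J K : {set T}).

Definition zeta g I : R := \sum_(K : {set T} | K \subset I) g K.

Definition mobius h I : R :=
  (-1) ^+ #|I| * \sum_(K : {set T} | K \subset I) (-1) ^+ #|K| * h K.

Definition union_conv g h J : R :=
  \sum_(I : {set T}) \sum_(I' : {set T} | I :|: I' == J) g I * h I'.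

Lemma eq_mobius h h' : h =1 h' -> mobius h =1 mobius h'.
Proof. by move=> eq_h I; congr (_ * _); apply: eq_bigr => K _; rewrite eq_h. Qed.

Lemma sum_sign_subset_chain (F : {set T} -> R) I :
  \sum_(J : {set T} | J \subset I) (-1) ^+ #|J| * \sum_(K : {set T} | K \subset J) F K =
  (-1) ^+ #|I| * F I.
Proof.
under eq_bigr do rewrite big_distrr /=.
rewrite (exchange_big_dep (fun K => K \subset I)) /=; last first.
  by move=> J K sJI sKJ; apply: subset_trans sJI.
under eq_bigr => K _.
  rewrite (eq_bigl (fun J => (K \subset J) && (J \subset I))); last by move=> J; apply: andbC.
  by rewrite -big_distrl sum_sign_interval over.
rewrite (bigD1 I) //= eqxx big1 ?addr0 // => K /andP[_ /negbTE ->].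
by rewrite mul0r.
Qed.

Lemma zeta_mobius h I : zeta (mobius h) I = h I.
Proof. by rewrite /zeta /mobius sum_sign_subset_chain signrMK. Qed.

Lemma mobius_zeta g I : mobius (zeta g) I = g I.
Proof. by rewrite /zeta /mobius sum_sign_subset_chain signrMK. Qed.

Lemma zeta_union_conv g h K : zeta (union_conv g h) K = zeta g K * zeta h K.
Proof.
rewrite /zeta /union_conv big_distrlr /= exchange_big [RHS]big_mkcond /=.
apply: eq_bigr => I _.
rewrite (exchange_big_dep predT) //=.
under eq_bigr => I' _.
  rewrite big_andbC big_mkcondr /= (big_pred1 (I :|: I')); last by move=> J; apply: eq_sym.
  over.
rewrite -big_mkcond /=.
under eq_bigl => I' do rewrite subUset.
by case: (I \subset K) => //=; rewrite big_pred0.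
Qed.

Lemma mobiusM h h' :
  mobius (fun K => h K * h' K) =1 union_conv (mobius h) (mobius h').
Proof.
move=> J; rewrite -[RHS]mobius_zeta; apply: eq_mobius => K.
by rewrite zeta_union_conv !zeta_mobius.
Qed.

End SubsetTransforms.

Lemma sum_subset_enum (V : nmodType) (T : finType) (A : {set T}) (F : {set T} -> V) :
  \sum_(K : {set T} | K \subset A) F K =
  \sum_(J : {set 'I_#|A|}) F [set enum_val j | j in J].
Proof.
rewrite (reindex (fun J : {set 'I_#|A|} => [set enum_val j | j in J])) /=.
  by apply: eq_bigl => J; apply/subsetP => _ /imsetP[j _ ->]; apply: enum_valP.
exists (fun K : {set T} => (@enum_val _ (mem A)) @^-1: K) => [J _|K].
  by apply/setP => j; rewrite inE mem_imset //; apply: enum_val_inj.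
rewrite inE => sKA; apply/setP => y; apply/imsetP/idP => [[j]|yK].
  by rewrite inE => jK ->.
have yA := subsetP sKA y yK.
by exists (enum_rank_in yA y); rewrite ?inE enum_rankK_in.
Qed.

Section Polarization.
Variables (R : realType) (V : lmodType R) (Q : Type) (act : Q -> V -> Q)
          (f : Q -> R) (q : Q) (n : nat) (v : 'I_n -> V).

Lemma polarization_subvecE (I : {set 'I_n}) :
  polarization act #|I| f q (subvec v I) =
  mobius (fun K => f (act q (\sum_(j in K) v j))) I.
Proof.
rewrite /polarization /mobius sum_subset_enum; congr (_ * _); apply: eq_bigr => J _.
rewrite card_imset; last exact: enum_val_inj.
by rewrite big_imset //; move=> j1 j2 _ _; apply: enum_val_inj.
Qed.

Lemma polarizationE :
  polarization act n f q v = mobius (fun K => f (act q (\sum_(j in K) v j))) setT.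
Proof.
rewrite /polarization /mobius cardsT card_ord; congr (_ * _).
by apply: eq_bigl => K; rewrite subsetT.
Qed.

End Polarization.

Theorem proposition3 (R : realType) (V : lmodType R) (Q : Type)
    (act : Q -> V -> Q) (haff : is_affine_space act)
    (f f' : Q -> R) (n : nat) (q : Q) (v : 'I_n -> V) :
  polarization act n (fun x => f x * f' x) q v =
  \sum_(I : {set 'I_n}) \sum_(I' : {set 'I_n} | I :|: I' == setT)
     polarization act #|I| f q (subvec v I) * polarization act #|I'| f' q (subvec v I').
Proof.
rewrite polarizationE (mobiusM (fun K => f _) (fun K => f' _)).
by apply: eq_bigr => I _; apply: eq_bigr => I' _; rewrite !polarization_subvecE.
Qed.
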